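(* Let $d\ge2$. Let $C\subseteq\mathbb Z^d$ be a cube and let $\mathcal C$ be a collection of cubes such that $\mathrm{nbhd}(C')\subseteq C$ for every $C'\in\mathcal C$ and $\mathrm{nbhd}(C')\cap\mathrm{nbhd}(C'')=\emptyset$ for all distinct $C',C''\in\mathcal C$. Put $$E=\mathrm{edges}^+(C)\setminus\bigcup\{\mathrm{edges}(\mathrm{nbhd}(C')):C'\in\mathcal C\}.$$ Let $f:\mathbb Z^d\to\mathbb Z$ and let $\varphi:G\to\mathbb R$ be a bounded $f$-flow on the Cayley graph $G$ of $\mathbb Z^d$. Then there exists an $f$-flow $\psi:G\to\mathbb R$ such that: (i) $\mathrm{supp}(\varphi-\psi)\subseteq\mathrm{edges}(\mathrm{nbhd}(C))$; (ii) for every $C'\in\mathcal C$, $(\varphi-\psi)(x,y)=0$ whenever $(x,y)\in\mathrm{edges}^+(C')$ or $(y,x)\in\mathrm{edges}^+(C')$; (iii) $\psi(e)\in\mathbb Z$ for every edge $e\in E$; (iv) $|\varphi-\psi|<6d$ on every edge.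
   Context: $G=\{(x,x')\in\mathbb Z^d\times\mathbb Z^d: x'-x\in\{\pm e_1,\dots,\pm e_d\}\}$ is the Cayley graph of $\mathbb Z^d$; an edge $(x,x')$ is positively oriented if $x'-x=e_j$ for some $j$. For $A\subseteq\mathbb Z^d$: $\mathrm{edges}(A)=\{(x,x+e_j):1\le j\le d,\ \{x,x+e_j\}\subseteq A\}$; $\mathrm{edges}^+(A)=\{(x,x+e_j):1\le j\le d,\ \{x,x+e_j\}\cap A\ne\emptyset\}$; $\mathrm{nbhd}(A)=\{x+y:x\in A,\ y\in\{-1,0,1\}^d\}$. A cube is a set of the form $\{n_1,\dots,n_1+k_1\}\times\dots\times\{n_d,\dots,n_d+k_d\}$ with $n_i\in\mathbb Z$, $k_i\ge0$. An $f$-flow is $\varphi:G\to\mathbb R$ with $\varphi(x,y)=-\varphi(y,x)$ and $f(x)=\sum_{(x,y)\in G}\varphi(x,y)$ for all $x$. For antisymmetric $\eta$, ''$\mathrm{supp}(\eta)\subseteq\mathcal E$'' for a set $\mathcal E$ of positively oriented edges means $\eta(x,y)=0$ unless $(x,y)\in\mathcal E$ or $(y,x)\in\mathcal E$. *)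

From Stdlib Require Import Reals ZArith List.
Open Scope R_scope.

(* Points of Z^d are represented as functions nat -> Z whose coordinates
   of index >= d vanish. *)
Definition pt := nat -> Z.
Definition inZd (d : nat) (x : pt) : Prop := forall i, (d <= i)%nat -> x i = 0%Z.

Definition shift (x : pt) (j : nat) (s : Z) : pt :=
  fun i => if Nat.eqb i j then (x i + s)%Z else x i.

Definition adj (d : nat) (x y : pt) : Prop :=
  inZd d x /\ exists j, (j < d)%nat /\ (y = shift x j 1 \/ y = shift x j (-1)).

Definition pset := pt -> Prop.

Definition isCube (d : nat) (A : pset) : Prop :=
  exists n k : nat -> Z, (forall i, (0 <= k i)%Z) /\
    forall x, A x <-> (inZd d x /\ forall i, (i < d)%nat -> (n i <= x i <= n i + k i)%Z).

Definition nbhd (d : nat) (A : pset) : pset :=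
  fun y => exists x z, A x /\ inZd d z /\
    (forall i, (i < d)%nat -> (-1 <= z i <= 1)%Z) /\ y = (fun i => (x i + z i)%Z).

Definition edges (d : nat) (A : pset) (x y : pt) : Prop :=
  inZd d x /\ exists j, (j < d)%nat /\ y = shift x j 1 /\ A x /\ A y.

Definition edgesP (d : nat) (A : pset) (x y : pt) : Prop :=
  inZd d x /\ exists j, (j < d)%nat /\ y = shift x j 1 /\ (A x \/ A y).

Definition outflow (d : nat) (phi : pt -> pt -> R) (x : pt) : R :=
  fold_right (fun j acc => phi x (shift x j 1) + phi x (shift x j (-1)) + acc) 0 (seq 0 d).

Definition isFlow (d : nat) (f : pt -> Z) (phi : pt -> pt -> R) : Prop :=
  (forall x y, adj d x y -> phi x y = - phi y x) /\
  (forall x, inZd d x -> IZR (f x) = outflow d phi x).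

Definition boundedFlow (d : nat) (phi : pt -> pt -> R) : Prop :=
  exists M, forall x y, adj d x y -> Rabs (phi x y) <= M.

(* supp(eta) ⊆ E, for E a set of positively oriented edges *)
Definition suppIn (d : nat) (eta : pt -> pt -> R) (E : pt -> pt -> Prop) : Prop :=
  forall x y, adj d x y -> ~ E x y -> ~ E y x -> eta x y = 0.

(* Direction 0 is the sweep direction, directions 1..d-1 are transverse.  The
   new flow is psi = phi + eta, where eta is the boundary of a field
   [plaq j y] in [0,1) on the (0,j)-plaquettes.  A boundary is divergence free,
   so psi is again an f-flow; an edge meets at most d-1 plaquettes, so
   |phi - psi| <= d-1 < 6d.  The plaquette field is built slice by slice
   (slices y 0 = const, lowest first):
   - on a transverse edge of E, plaq = frac (plaquette below + phi), which
     makes psi integral there;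
   - on the bottom face of nbhd(C) and on the exit face of each nbhd(C'), a
     face rounding lemma makes the direction-0 edges integral, except at the
     top corner of the face (which is outside C for the bottom face);
   - the other direction-0 edges of E are integral by induction on the slice:
     at a point away from the cubes by flow conservation (f is integral), and
     at the top corner of an exit face by a discrete Gauss (flux) argument
     over nbhd(C').
   Nonzero plaquettes only touch points of nbhd(C) outside all cubes, which
   gives the support properties. *)

From Stdlib Require Import Reals ZArith List Lia Lra Classical ClassicalEpsilon
  FunctionalExtensionality Permutation.
(* Imported after ZArith so that [shift] refers to the lattice translation. *)
Open Scope R_scope.

Definition isZ (r : R) : Prop := exists z : Z, r = IZR z.

Lemma isZ_IZR z : isZ (IZR z). Proof. exists z; reflexivity. Qed.
Lemma isZ_0 : isZ 0. Proof. exists 0%Z; reflexivity. Qed.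
Lemma isZ_add a b : isZ a -> isZ b -> isZ (a + b).
Proof. intros [x ->] [y ->]; exists (x + y)%Z; rewrite plus_IZR; reflexivity. Qed.
Lemma isZ_opp a : isZ a -> isZ (- a).
Proof. intros [x ->]; exists (- x)%Z; rewrite opp_IZR; reflexivity. Qed.
Lemma isZ_sub a b : isZ a -> isZ b -> isZ (a - b).
Proof. intros; unfold Rminus; apply isZ_add; auto; apply isZ_opp; auto. Qed.

Lemma frac_isZ r : isZ (r - frac_part r).
Proof. unfold frac_part. exists (Int_part r). ring. Qed.
Lemma frac_bounds r : 0 <= frac_part r < 1.
Proof. destruct (base_fp r); lra. Qed.

Definition sumL {A : Type} (l : list A) (F : A -> R) : R :=
  fold_right (fun a acc => F a + acc) 0 l.

Lemma sumL_cons {A} (a : A) l F : sumL (a :: l) F = F a + sumL l F.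
Proof. reflexivity. Qed.
Lemma sumL_ext {A} (l : list A) F G : (forall a, In a l -> F a = G a) -> sumL l F = sumL l G.
Proof. induction l; simpl; intros H; auto. rewrite H by auto; rewrite IHl; auto. Qed.
Lemma sumL_zero {A} (l : list A) : sumL l (fun _ => 0) = 0.
Proof. induction l; simpl; auto. unfold sumL in *; simpl; rewrite IHl; lra. Qed.
Lemma sumL_plus {A} (l : list A) F G : sumL l (fun a => F a + G a) = sumL l F + sumL l G.
Proof. induction l; simpl. lra. unfold sumL in *; simpl in *. rewrite IHl; lra. Qed.
Lemma sumL_opp {A} (l : list A) F : sumL l (fun a => - F a) = - sumL l F.
Proof. induction l; simpl. lra. unfold sumL in *; simpl in *. rewrite IHl; lra. Qed.
Lemma sumL_minus {A} (l : list A) F G : sumL l (fun a => F a - G a) = sumL l F - sumL l G.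
Proof. unfold Rminus. rewrite sumL_plus, sumL_opp. reflexivity. Qed.
Lemma sumL_map {A B} (f : A -> B) l F : sumL (map f l) F = sumL l (fun a => F (f a)).
Proof. induction l; simpl; auto. unfold sumL in *; simpl; rewrite IHl; auto. Qed.
Lemma sumL_perm {A} (l l' : list A) F : Permutation l l' -> sumL l F = sumL l' F.
Proof. induction 1; unfold sumL in *; simpl in *; try lra. Qed.
Lemma sumL_filter {A} (l : list A) (P : A -> bool) F :
  sumL l F = sumL (filter P l) F + sumL (filter (fun a => negb (P a)) l) F.
Proof.
  induction l; simpl. lra.
  destruct (P a); simpl; unfold sumL in *; simpl; rewrite IHl; lra.
Qed.
Lemma sumL_swap {A B} (l1 : list A) (l2 : list B) (F : A -> B -> R) :
  sumL l1 (fun a => sumL l2 (F a)) = sumL l2 (fun b => sumL l1 (fun a => F a b)).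
Proof.
  induction l1.
  - symmetry. apply sumL_zero.
  - rewrite sumL_cons, IHl1, <- sumL_plus. reflexivity.
Qed.

Lemma sumL_nz {A} (l : list A) F : sumL l F <> 0 -> exists a, In a l /\ F a <> 0.
Proof.
  intros H. apply NNPP. intro H2. apply H. rewrite (sumL_ext l F (fun _ => 0)). apply sumL_zero.
  intros a Ha. apply NNPP. intro H3. apply H2. exists a; auto.
Qed.

Lemma sumL_abs_le {A} (l : list A) F (M : R) : (forall a, In a l -> Rabs (F a) <= M) ->
  Rabs (sumL l F) <= INR (length l) * M.
Proof.
  induction l; intros H.
  - unfold sumL; simpl. rewrite Rabs_R0. lra.
  - rewrite sumL_cons. cbn [length]. eapply Rle_trans; [apply Rabs_triang|].
    rewrite S_INR. specialize (IHl (fun b Hb => H b (or_intror Hb))).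
    specialize (H a (or_introl eq_refl)). lra.
Qed.

Lemma sumL_indicator {A} (l : list A) (P : A -> Prop) (a : A) (r : R) :
  NoDup l -> In a l -> (forall b, In b l -> P b -> b = a) -> P a ->
  sumL l (fun b => if excluded_middle_informative (P b) then r else 0) = r.
Proof.
  induction l as [|b l IH]; intros Hnd Hin Hu Ha; [destruct Hin|].
  apply NoDup_cons_iff in Hnd as [Hb Hnd]. rewrite sumL_cons.
  destruct Hin as [<-|Hin].
  - destruct excluded_middle_informative; [|contradiction].
    rewrite (sumL_ext _ _ (fun _ => 0)); [rewrite sumL_zero; ring|].
    intros c Hc. destruct excluded_middle_informative as [Hp|]; auto.
    apply Hu in Hp; [subst; contradiction|right; auto].
  - destruct excluded_middle_informative as [Hp|Hp].
    + apply Hu in Hp; [subst; contradiction|left; auto].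
    + rewrite IH; auto. ring. intros c Hc; apply Hu; right; auto.
Qed.

Lemma sumL_indicator0 {A} (l : list A) (P : A -> Prop) (r : A -> R) :
  (forall b, In b l -> ~ P b) ->
  sumL l (fun b => if excluded_middle_informative (P b) then r b else 0) = 0.
Proof.
  intros H. rewrite (sumL_ext _ _ (fun _ => 0)); [apply sumL_zero|].
  intros b Hb. destruct excluded_middle_informative; auto. exfalso; eapply H; eauto.
Qed.

Lemma sumL_isZ {A} (l : list A) F : (forall a, In a l -> isZ (F a)) -> isZ (sumL l F).
Proof. induction l; simpl; intros H. apply isZ_0. apply isZ_add; auto. Qed.

Lemma sumL_one_notZ {A} (l : list A) F x :
  NoDup l -> In x l -> (forall y, In y l -> y <> x -> isZ (F y)) -> isZ (sumL l F) -> isZ (F x).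
Proof.
  induction l as [|a l IH]; intros Hnd Hin Hy Hs; simpl in Hin; [contradiction|].
  apply NoDup_cons_iff in Hnd as [Hna Hnd].
  destruct Hin as [<-|Hin].
  - assert (isZ (sumL l F)).
    { apply sumL_isZ. intros y Hy'. apply Hy; [right; auto | intros ->; contradiction]. }
    replace (F a) with (sumL (a :: l) F - sumL l F) by (rewrite sumL_cons; ring).
    apply isZ_sub; auto.
  - assert (Ha : a <> x) by (intros ->; contradiction).
    apply IH; [exact Hnd|exact Hin| intros y Hy1 Hy2; apply Hy; [right; auto|auto] |].
    rewrite sumL_cons in Hs.
    replace (sumL l F) with (F a + sumL l F - F a) by ring. apply isZ_sub; auto.
    apply Hy; [left; auto|auto].
Qed.

Lemma shift_at x j s : shift x j s j = (x j + s)%Z.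
Proof. unfold shift. rewrite Nat.eqb_refl; auto. Qed.
Lemma shift_other x j s i : i <> j -> shift x j s i = x i.
Proof. intros H. unfold shift. rewrite (proj2 (Nat.eqb_neq i j) H). auto. Qed.
Lemma shift_zero y j : shift y j 0 = y.
Proof. apply functional_extensionality; intro i; unfold shift; destruct (Nat.eqb i j); lia. Qed.
Lemma shift_inv x j s : shift (shift x j s) j (- s) = x.
Proof. apply functional_extensionality; intro i; unfold shift. destruct (Nat.eqb i j); lia. Qed.
Lemma shift_inv1 x j : shift (shift x j 1) j (-1) = x.
Proof. apply (shift_inv x j 1). Qed.
Lemma shift_inv2 x j : shift (shift x j (-1)) j 1 = x.
Proof. apply (shift_inv x j (-1)). Qed.
Lemma shift_comm x i j a b : shift (shift x i a) j b = shift (shift x j b) i a.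
Proof.
  apply functional_extensionality; intro k; unfold shift.
  destruct (Nat.eqb k i), (Nat.eqb k j); lia.
Qed.
Lemma shift_inj x y j s : shift x j s = shift y j s -> x = y.
Proof. intro H. rewrite <- (shift_inv x j s), <- (shift_inv y j s), H. reflexivity. Qed.
Lemma shift_ne x j j' s s' : (s <> 0)%Z -> (s' <> 0)%Z -> (j <> j' \/ s <> s') ->
  shift x j s <> shift x j' s'.
Proof.
  intros H1 H2 H3 E. assert (E1 := f_equal (fun y => y j) E).
  assert (E2 := f_equal (fun y => y j') E).
  unfold shift in E1, E2. rewrite Nat.eqb_refl in E1, E2.
  destruct (Nat.eqb j j') eqn:Ej.
  - apply Nat.eqb_eq in Ej; subst. destruct H3; [congruence|lia].
  - rewrite Nat.eqb_sym, Ej in E2. lia.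
Qed.
Lemma inZd_shift d x j s : (j < d)%nat -> inZd d x -> inZd d (shift x j s).
Proof. intros Hj Hx i Hi. unfold shift. destruct (Nat.eqb_spec i j); [lia|auto]. Qed.

Definition upd (p : pt) (i : nat) (t : Z) : pt := fun k => if Nat.eqb k i then t else p k.

Lemma seq0_in d j : In j (seq 0 d) <-> (j < d)%nat.
Proof. rewrite in_seq. lia. Qed.

Lemma outflow_add d (p q : pt -> pt -> R) x :
  outflow d (fun u v => p u v + q u v) x = outflow d p x + outflow d q x.
Proof. unfold outflow. induction (seq 0 d); simpl; lra. Qed.

Definition inBoxI (I : list nat) (lo hi : nat -> Z) (p v : pt) : Prop :=
  (forall i, In i I -> (lo i <= v i <= hi i)%Z) /\ (forall i, ~ In i I -> v i = p i).

Definition vstar (I : list nat) (hi : nat -> Z) (p : pt) : pt :=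
  fun i => if in_dec Nat.eq_dec i I then hi i else p i.

(* Discrete divergence, in the directions [I], of a field [g]; the value
   [g j v] lives on the edge [(v, v + e_j)]. *)
Definition Dv (I : list nat) (g : nat -> pt -> R) (v : pt) : R :=
  sumL I (fun j => g j v - g j (shift v j (-1))).

Lemma inBoxI_cons i I lo hi p v : ~ In i I ->
  (inBoxI (i :: I) lo hi p v <-> ((lo i <= v i <= hi i)%Z /\ inBoxI I lo hi (upd p i (v i)) v)).
Proof.
  intros Hi; unfold inBoxI, upd; split.
  - intros [H1 H2]; split; [apply H1; left; auto|split].
    + intros k Hk; apply H1; right; auto.
    + intros k Hk. destruct (Nat.eqb_spec k i); [subst; auto|].
      apply H2. intros [->|?]; auto.
  - intros [H1 [H2 H3]]; split.
    + intros k [<-|Hk]; auto.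
    + intros k Hk. rewrite H3 by (intro; apply Hk; right; auto).
      destruct (Nat.eqb_spec k i); auto. exfalso; apply Hk; left; auto.
Qed.

Lemma upd_in_box I lo hi p i t v : ~ In i I -> inBoxI I lo hi (upd p i t) v -> v i = t.
Proof. intros Hi [_ H]. rewrite H by auto. unfold upd. rewrite Nat.eqb_refl. auto. Qed.

(* Rounding along a line: given demands [X t], the running fractional parts
   [lineRound t = frac (X t + lineRound (t - 1))] for [lo <= t < hi] (and 0 elsewhere)
   make every increment [lineRound t - lineRound (t-1) - X t] on [lo..hi-1] an integer. *)
Fixpoint lineRoundAux (X : Z -> R) (lo : Z) (n : nat) : R :=
  match n with
  | O => frac_part (X lo + 0)
  | S m => frac_part (X (lo + Z.of_nat (S m))%Z + lineRoundAux X lo m)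
  end.

Definition lineRound (X : Z -> R) (lo hi : Z) (t : Z) : R :=
  if andb (lo <=? t)%Z (t <? hi)%Z then lineRoundAux X lo (Z.to_nat (t - lo)) else 0.

Lemma lineRound_out X lo hi t : ~ (lo <= t < hi)%Z -> lineRound X lo hi t = 0.
Proof. intros H. unfold lineRound. destruct (Z.leb_spec lo t), (Z.ltb_spec t hi); simpl; auto; lia. Qed.

Lemma lineRound_step X lo hi t : (lo <= t < hi)%Z ->
  lineRound X lo hi t = frac_part (X t + lineRound X lo hi (t - 1)).
Proof.
  intros H. unfold lineRound at 1. destruct (Z.leb_spec lo t), (Z.ltb_spec t hi); try lia. simpl.
  destruct (Z.eq_dec t lo) as [->|Hne].
  - replace (lo - lo)%Z with 0%Z by lia. simpl. rewrite lineRound_out by lia. reflexivity.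
  - remember (Z.to_nat (t - lo)) as n. destruct n as [|m]; [lia|].
    simpl lineRoundAux. unfold lineRound. destruct (Z.leb_spec lo (t-1)), (Z.ltb_spec (t-1) hi); try lia. simpl.
    replace (Z.to_nat (t - 1 - lo)) with m by lia.
    f_equal; f_equal; f_equal; lia.
Qed.

Lemma lineRound_bounds X lo hi t : 0 <= lineRound X lo hi t < 1.
Proof.
  unfold lineRound. destruct (andb _ _); [|lra].
  destruct (Z.to_nat (t - lo)); simpl; apply frac_bounds.
Qed.

Definition FaceRounding (I : list nat) (lo hi : nat -> Z) (p : pt) (c : pt -> R)
    (g : nat -> pt -> R) : Prop :=
  (forall j v, 0 <= g j v < 1) /\
  (forall j v, g j v <> 0 -> In j I /\ inBoxI I lo hi p v /\ inBoxI I lo hi p (shift v j 1)) /\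
  (forall v, inBoxI I lo hi p v -> v <> vstar I hi p -> isZ (Dv I g v - c v)).

(* Adding one direction [i] to a box: given roundings [G t] on every slice
   [v i = t], round along the line of slice corners in direction [i]. *)
Section FaceExtension.
Variables (i : nat) (I : list nat) (lo hi : nat -> Z) (p : pt) (c : pt -> R)
  (G : Z -> nat -> pt -> R).
Hypothesis Hi : ~ In i I.
Hypothesis Hlh : forall k, In k I -> (lo k <= hi k)%Z.
Hypothesis HG : forall t, FaceRounding I lo hi (upd p i t) c (G t).

Definition cornerLine (t : Z) : pt := vstar I hi (upd p i t).
Definition cornerDefect (t : Z) : R := c (cornerLine t) - Dv I (G t) (cornerLine t).

Definition faceExt (j : nat) (v : pt) : R :=
  if Nat.eqb j i then
    (if excluded_middle_informative (v = cornerLine (v i))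
     then lineRound cornerDefect (lo i) (hi i) (v i) else 0)
  else (if andb (lo i <=? v i)%Z (v i <=? hi i)%Z then G (v i) j v else 0).

Lemma cornerLine_at t : cornerLine t i = t.
Proof.
  unfold cornerLine, vstar, upd. destruct (in_dec Nat.eq_dec i I); [contradiction|].
  rewrite Nat.eqb_refl; auto.
Qed.

Lemma cornerLine_down t : shift (cornerLine t) i (-1) = cornerLine (t - 1)%Z.
Proof.
  apply functional_extensionality; intro k. unfold cornerLine, vstar, upd, shift.
  destruct (Nat.eqb_spec k i).
  - subst. destruct (in_dec Nat.eq_dec i I); [contradiction|]. rewrite ?Nat.eqb_refl; lia.
  - destruct (in_dec Nat.eq_dec k I); auto.
Qed.

Lemma cornerLine_box t : (lo i <= t <= hi i)%Z -> inBoxI (i :: I) lo hi p (cornerLine t).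
Proof.
  intros Ht. apply inBoxI_cons; auto. rewrite cornerLine_at. split; auto. split.
  - intros k Hk. unfold cornerLine, vstar. destruct (in_dec Nat.eq_dec k I); [|contradiction].
    specialize (Hlh k Hk); lia.
  - intros k Hk. unfold cornerLine, vstar. destruct (in_dec Nat.eq_dec k I); [contradiction|]. auto.
Qed.

Lemma cornerLine_top : cornerLine (hi i) = vstar (i :: I) hi p.
Proof.
  apply functional_extensionality; intro k. unfold cornerLine, vstar, upd.
  destruct (Nat.eqb_spec k i) as [->|Hki].
  - destruct (in_dec Nat.eq_dec i (i::I)) as [_|Hn]; [|exfalso; apply Hn; left; auto].
    destruct (in_dec Nat.eq_dec i I); [contradiction|]. lia.
  - destruct (in_dec Nat.eq_dec k I) as [Hk|Hk];
    destruct (in_dec Nat.eq_dec k (i::I)) as [Hk'|Hk']; auto.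
    + exfalso; apply Hk'; right; auto.
    + destruct Hk' as [->|?]; [congruence|contradiction].
Qed.

Lemma faceExt_bounds j v : 0 <= faceExt j v < 1.
Proof.
  unfold faceExt. destruct (Nat.eqb j i).
  - destruct excluded_middle_informative; [apply lineRound_bounds|lra].
  - destruct (andb _ _); [apply HG|lra].
Qed.

Lemma faceExt_support j v : faceExt j v <> 0 ->
  In j (i :: I) /\ inBoxI (i :: I) lo hi p v /\ inBoxI (i :: I) lo hi p (shift v j 1).
Proof.
  unfold faceExt. intros Hg. destruct (Nat.eqb_spec j i) as [->|Hji].
  - destruct excluded_middle_informative as [Hv|]; [|lra].
    assert (Hr : (lo i <= v i < hi i)%Z).
    { destruct (Z_lt_le_dec (v i) (hi i)); destruct (Z_le_gt_dec (lo i) (v i)); auto;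
      exfalso; apply Hg; rewrite lineRound_out; auto; lia. }
    split; [left; auto|split].
    + rewrite Hv. apply cornerLine_box. lia.
    + replace (shift v i 1) with (cornerLine (v i + 1)%Z).
      * apply cornerLine_box. lia.
      * rewrite Hv at 2. rewrite <- (shift_inv2 (cornerLine (v i + 1)%Z) i), cornerLine_down.
        do 2 f_equal. lia.
  - destruct (Z.leb_spec (lo i) (v i)), (Z.leb_spec (v i) (hi i)); simpl in Hg; try lra.
    destruct (proj1 (proj2 (HG (v i))) j v Hg) as [Hj [Hb1 Hb2]].
    split; [right; auto|split].
    + apply inBoxI_cons; auto.
    + assert (Hsi : shift v j 1 i = v i) by (apply shift_other; auto).
      apply inBoxI_cons; auto. rewrite Hsi. split; auto.
Qed.

Lemma faceExt_Dv_slice v : (lo i <= v i <= hi i)%Z ->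
  Dv I faceExt v = Dv I (G (v i)) v.
Proof.
  intros Ht. unfold Dv. apply sumL_ext. intros j Hj.
  assert (Hji : j <> i) by (intros ->; contradiction).
  unfold faceExt. rewrite (proj2 (Nat.eqb_neq j i) Hji).
  rewrite (shift_other v j (-1) i) by auto.
  destruct (Z.leb_spec (lo i) (v i)), (Z.leb_spec (v i) (hi i)); simpl; try lia. reflexivity.
Qed.

Lemma faceExt_div v : inBoxI (i :: I) lo hi p v -> v <> vstar (i :: I) hi p ->
  isZ (Dv (i :: I) faceExt v - c v).
Proof.
  intros Hv Hne. apply inBoxI_cons in Hv as [Hti Hv]; auto.
  unfold Dv at 1. rewrite sumL_cons. fold (Dv I faceExt v).
  rewrite faceExt_Dv_slice by auto.
  unfold faceExt at 1 2. rewrite Nat.eqb_refl, shift_at.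
  replace (v i + -1)%Z with (v i - 1)%Z by lia.
  destruct (excluded_middle_informative (v = cornerLine (v i))) as [Hvw|Hvw].
  - assert (Htl : (v i < hi i)%Z).
    { destruct (Z.eq_dec (v i) (hi i)) as [E|]; [|lia].
      exfalso; apply Hne. rewrite Hvw, E. apply cornerLine_top. }
    assert (Hu : shift v i (-1) = cornerLine (v i - 1)%Z) by (rewrite Hvw at 1; apply cornerLine_down).
    destruct (excluded_middle_informative (shift v i (-1) = cornerLine (v i - 1)%Z)); [|contradiction].
    rewrite (lineRound_step _ _ _ (v i)) by lia.
    set (Y := cornerDefect (v i) + lineRound cornerDefect (lo i) (hi i) (v i - 1)).
    replace (frac_part Y - lineRound cornerDefect (lo i) (hi i) (v i - 1) + Dv I (G (v i)) v - c v)
      with (- (Y - frac_part Y)).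
    2:{ unfold Y, cornerDefect. rewrite <- Hvw. ring. }
    apply isZ_opp, frac_isZ.
  - assert (Hu : shift v i (-1) <> cornerLine (v i - 1)%Z).
    { intro E. apply Hvw. rewrite <- cornerLine_down in E. apply shift_inj in E. auto. }
    destruct (excluded_middle_informative (shift v i (-1) = cornerLine (v i - 1)%Z)); [contradiction|].
    replace (0 - 0 + Dv I (G (v i)) v - c v) with (Dv I (G (v i)) v - c v) by ring.
    apply (proj2 (proj2 (HG (v i)))); auto.
Qed.

End FaceExtension.

Lemma face_lemma : forall I, NoDup I -> forall lo hi p (c : pt -> R),
  (forall i, In i I -> (lo i <= hi i)%Z) -> exists g, FaceRounding I lo hi p c g.
Proof.
  induction I as [|i I IH]; intros Hnd lo hi p c Hlh.
  - exists (fun _ _ => 0). split; [|split].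
    + intros; lra.
    + intros j v H; lra.
    + intros v [_ Hv] Hne. exfalso; apply Hne. apply functional_extensionality; intro k.
      unfold vstar. destruct (in_dec Nat.eq_dec k nil) as [[]|]; auto.
  - apply NoDup_cons_iff in Hnd as [Hni Hnd].
    assert (HG : forall t : Z, exists g, FaceRounding I lo hi (upd p i t) c g).
    { intro t; apply IH; auto. intros; apply Hlh; right; auto. }
    apply choice in HG as [G HG].
    assert (HlhI : forall k, In k I -> (lo k <= hi k)%Z) by (intros; apply Hlh; right; auto).
    exists (faceExt i I lo hi p c G). split; [|split].
    + apply faceExt_bounds; auto.
    + apply faceExt_support; auto.
    + apply faceExt_div; auto.
Qed.

Definition faceRound (I : list nat) (lo hi : nat -> Z) (p : pt) (c : pt -> R) : nat -> pt -> R :=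
  match excluded_middle_informative (exists g, FaceRounding I lo hi p c g) with
  | left H => proj1_sig (constructive_indefinite_description _ H)
  | right _ => fun _ _ => 0
  end.

Lemma faceRound_bounds I lo hi p c j v : 0 <= faceRound I lo hi p c j v < 1.
Proof.
  unfold faceRound. destruct excluded_middle_informative as [H|H]; [|lra].
  apply (proj2_sig (constructive_indefinite_description _ H)).
Qed.

Lemma faceRound_supp I lo hi p c j v : faceRound I lo hi p c j v <> 0 ->
  In j I /\ inBoxI I lo hi p v /\ inBoxI I lo hi p (shift v j 1).
Proof.
  unfold faceRound. destruct excluded_middle_informative as [H|H].
  - apply (proj2_sig (constructive_indefinite_description _ H)).
  - intro E; exfalso; apply E; reflexivity.
Qed.

Lemma faceRound_spec I lo hi p c v : NoDup I -> (forall i, In i I -> (lo i <= hi i)%Z) ->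
  inBoxI I lo hi p v -> v <> vstar I hi p -> isZ (Dv I (faceRound I lo hi p c) v - c v).
Proof.
  intros Hnd Hlh. unfold faceRound. destruct excluded_middle_informative as [H|H].
  - apply (proj2_sig (constructive_indefinite_description _ H)).
  - exfalso. apply H. apply face_lemma; auto.
Qed.

Fixpoint zrange (a : Z) (n : nat) : list Z :=
  match n with O => nil | S m => a :: zrange (a + 1)%Z m end.

Lemma In_zrange a n t : In t (zrange a n) <-> (a <= t < a + Z.of_nat n)%Z.
Proof. revert a; induction n; intro a; simpl; [lia|]. rewrite IHn. lia. Qed.
Lemma NoDup_zrange a n : NoDup (zrange a n).
Proof. revert a; induction n; intro a; simpl; constructor; auto. rewrite In_zrange; lia. Qed.

Fixpoint boxList (I : list nat) (lo hi : nat -> Z) (p : pt) : list pt :=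
  match I with
  | nil => p :: nil
  | i :: I' => flat_map (fun t => boxList I' lo hi (upd p i t))
                        (zrange (lo i) (Z.to_nat (hi i - lo i + 1)))
  end.

Lemma NoDup_flat_map {A B} (f : A -> list B) (l : list A) :
  NoDup l -> (forall a, In a l -> NoDup (f a)) ->
  (forall a b x, In a l -> In b l -> In x (f a) -> In x (f b) -> a = b) -> NoDup (flat_map f l).
Proof.
  induction l as [|a l IH]; simpl; intros Hl Hf Hd; [constructor|].
  apply NoDup_cons_iff in Hl as [Ha Hl].
  apply NoDup_app.
  - apply Hf; left; auto.
  - apply IH; [exact Hl| |].
    + intros b Hb; apply Hf; right; exact Hb.
    + intros a0 b x H1 H2 H3 H4. apply (Hd a0 b x); auto.
  - intros x Hx Hx2. apply in_flat_map in Hx2 as [b [Hb Hxb]].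
    assert (a = b) by (apply (Hd a b x); auto). subst; contradiction.
Qed.

Lemma boxList_In I lo hi p v : NoDup I -> (In v (boxList I lo hi p) <-> inBoxI I lo hi p v).
Proof.
  revert p v; induction I as [|i I IH]; intros p v Hnd; simpl.
  - split.
    + intros [<-|[]]. split; [intros _ []|auto].
    + intros [_ H]. left. apply functional_extensionality; intro k; symmetry; apply H; auto.
  - apply NoDup_cons_iff in Hnd as [Hi Hnd].
    rewrite in_flat_map. rewrite inBoxI_cons by auto. split.
    + intros [t [Ht Hv]]. apply In_zrange in Ht. apply IH in Hv; auto.
      assert (v i = t) by (eapply upd_in_box; eauto). subst. split; auto. lia.
    + intros [Hr Hv]. exists (v i). split; [apply In_zrange; lia|]. apply IH; auto.
Qed.

Lemma boxList_NoDup I lo hi p : NoDup I -> NoDup (boxList I lo hi p).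
Proof.
  revert p; induction I as [|i I IH]; intros p Hnd; simpl.
  - constructor; [intros []|constructor].
  - apply NoDup_cons_iff in Hnd as [Hi Hnd].
    apply NoDup_flat_map.
    + apply NoDup_zrange.
    + intros; apply IH; auto.
    + intros a b x _ _ Ha Hb. apply boxList_In in Ha; auto. apply boxList_In in Hb; auto.
      apply upd_in_box in Ha; auto. apply upd_in_box in Hb; auto. congruence.
Qed.

Definition inb (S : pset) (v : pt) : bool :=
  if excluded_middle_informative (S v) then true else false.
Lemma inb_true S v : inb S v = true <-> S v.
Proof. unfold inb; destruct excluded_middle_informative; split; auto; discriminate. Qed.

(* Discrete Gauss formula in direction [k] for a finite set [S] listed by [L]:
   the direction-[k] outflows of an antisymmetric [q] summed over [S] reduce to
   the flux leaving [S] forwards minus the flux entering [S] forwards. *)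
Lemma direction_flux d (L : list pt) (S : pset) (q : pt -> pt -> R) k :
  NoDup L -> (forall v, In v L <-> S v) -> (forall v, S v -> inZd d v) ->
  (forall x y, adj d x y -> q x y = - q y x) -> (k < d)%nat ->
  sumL L (fun v => q v (shift v k 1) + q v (shift v k (-1))) =
    sumL (filter (fun v => negb (inb S (shift v k 1))) L) (fun v => q v (shift v k 1))
  - sumL (filter (fun v => negb (inb S (shift v k (-1)))) L)
         (fun v => q (shift v k (-1)) (shift (shift v k (-1)) k 1)).
Proof.
  intros Hnd HL HZd Hanti Hk.
  set (G := fun u => q u (shift u k 1)).
  rewrite (sumL_ext L _ (fun v => G v - G (shift v k (-1)))).
  2:{ intros v Hv. unfold G. rewrite shift_inv2, (Hanti v (shift v k (-1))); [ring|].
      split; [apply HZd, HL; auto|]. exists k; split; [auto|right; auto]. }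
  rewrite sumL_minus.
  rewrite (sumL_filter L (fun v => inb S (shift v k 1)) G).
  rewrite (sumL_filter L (fun v => inb S (shift v k (-1))) (fun v => G (shift v k (-1)))).
  rewrite <- (sumL_map (fun v => shift v k (-1)) (filter (fun v => inb S (shift v k (-1))) L) G).
  rewrite (sumL_perm (map (fun v => shift v k (-1)) (filter (fun v => inb S (shift v k (-1))) L))
             (filter (fun v => inb S (shift v k 1)) L)).
  - unfold G. ring.
  - apply NoDup_Permutation.
    + apply FinFun.Injective_map_NoDup. intros x y E. apply shift_inj in E; auto.
      apply NoDup_filter; auto.
    + apply NoDup_filter; auto.
    + intro x. rewrite in_map_iff, filter_In. split.
      * intros [v [<- Hv]]. apply filter_In in Hv as [Hv1 Hv2]. apply inb_true in Hv2.
        split; [apply HL; auto|]. rewrite shift_inv2. apply inb_true, HL; auto.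
      * intros [Hx1 Hx2]. exists (shift x k 1). split; [apply shift_inv1|].
        apply filter_In. split; [apply HL; apply inb_true in Hx2; auto|].
        rewrite shift_inv1. apply inb_true, HL; auto.
Qed.

Lemma flux_lemma d (L : list pt) (S : pset) (q : pt -> pt -> R) (w : pt) :
  NoDup L -> (forall v, In v L <-> S v) -> (forall v, S v -> inZd d v) ->
  (forall x y, adj d x y -> q x y = - q y x) ->
  (forall v, S v -> isZ (outflow d q v)) ->
  (forall k v, (0 < k < d)%nat -> S v -> ~ S (shift v k 1) -> isZ (q v (shift v k 1))) ->
  (forall k u, (k < d)%nat -> inZd d u -> ~ S u -> S (shift u k 1) -> isZ (q u (shift u k 1))) ->
  (forall v, S v -> ~ S (shift v 0 1) -> v <> w -> isZ (q v (shift v 0 1))) ->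
  S w -> ~ S (shift w 0 1) -> (0 < d)%nat -> isZ (q w (shift w 0 1)).
Proof.
  intros Hnd HL HZd Hanti Hout Hside Hin Hex Hw Hw0 Hd.
  set (A := fun k => sumL (filter (fun v => negb (inb S (shift v k 1))) L)
                          (fun v => q v (shift v k 1))).
  set (B := fun k => sumL (filter (fun v => negb (inb S (shift v k (-1)))) L)
                          (fun v => q (shift v k (-1)) (shift (shift v k (-1)) k 1))).
  assert (HB : forall k, (k < d)%nat -> isZ (B k)).
  { intros k Hk. apply sumL_isZ. intros v Hv. apply filter_In in Hv as [Hv1 Hv2].
    apply HL in Hv1. apply Hin; auto.
    - apply inZd_shift; auto.
    - intro HH. apply inb_true in HH. rewrite HH in Hv2. discriminate.
    - rewrite shift_inv2; auto. }
  assert (HA : forall k, (0 < k < d)%nat -> isZ (A k)).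
  { intros k Hk. apply sumL_isZ. intros v Hv. apply filter_In in Hv as [Hv1 Hv2].
    apply HL in Hv1. apply Hside; auto.
    intro HH. apply inb_true in HH. rewrite HH in Hv2. discriminate. }
  assert (Htot : isZ (sumL (seq 0 d) (fun k => A k - B k))).
  { rewrite (sumL_ext _ _ (fun k => sumL L (fun v => q v (shift v k 1) + q v (shift v k (-1))))).
    2:{ intros k Hk. apply seq0_in in Hk. symmetry. apply (direction_flux d); auto. }
    rewrite <- sumL_swap. apply sumL_isZ. intros v Hv. apply Hout, HL; auto. }
  destruct d as [|d']; [lia|].
  simpl seq in Htot. rewrite sumL_cons in Htot.
  assert (HA0 : isZ (A 0%nat)).
  { assert (H1 : isZ (sumL (seq 1 d') (fun k => A k - B k))).
    { apply sumL_isZ. intros k Hk. apply in_seq in Hk. apply isZ_sub; [apply HA|apply HB]; lia. }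
    replace (A 0%nat) with ((A 0%nat - B 0%nat + sumL (seq 1 d') (fun k => A k - B k))
                            - sumL (seq 1 d') (fun k => A k - B k) + B 0%nat) by ring.
    apply isZ_add; [apply isZ_sub; auto|apply HB; lia]. }
  apply (sumL_one_notZ _ (fun v => q v (shift v 0 1)) w
           (NoDup_filter (fun v => negb (inb S (shift v 0 1))) Hnd)); auto.
  - apply filter_In. split; [apply HL; auto|]. destruct (inb S (shift w 0 1)) eqn:E; auto.
    apply inb_true in E; contradiction.
  - intros y Hy Hne. apply filter_In in Hy as [Hy1 Hy2]. apply Hex; auto; [apply HL; auto|].
    intro HH. apply inb_true in HH. rewrite HH in Hy2. discriminate.
Qed.

Definition Box (d : nat) (lo hi : nat -> Z) (v : pt) : Prop :=
  inZd d v /\ forall i, (i < d)%nat -> (lo i <= v i <= hi i)%Z.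

Lemma Box_seq0 d lo hi v : inBoxI (seq 0 d) lo hi (fun _ => 0%Z) v <-> Box d lo hi v.
Proof.
  unfold inBoxI, Box. split.
  - intros [H1 H2]. split.
    + intros i Hi. apply H2. rewrite seq0_in. lia.
    + intros i Hi. apply H1, seq0_in; auto.
  - intros [H1 H2]. split.
    + intros i Hi. apply H2, seq0_in; auto.
    + intros i Hi. apply H1. rewrite seq0_in in Hi. lia.
Qed.

Lemma nbhd_box d (A : pset) lo hi y :
  (forall v, A v <-> Box d lo hi v) -> (forall i, (lo i <= hi i)%Z) ->
  (nbhd d A y <-> Box d (fun i => lo i - 1)%Z (fun i => hi i + 1)%Z y).
Proof.
  intros HA Hlh. split.
  - intros [x [z [Hx [Hz [Hzb ->]]]]]. apply HA in Hx as [Hx1 Hx2]. split.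
    + intros i Hi. rewrite Hx1, Hz by auto. auto.
    + intros i Hi. specialize (Hx2 i Hi); specialize (Hzb i Hi). lia.
  - intros [Hy1 Hy2].
    set (x := fun i => if (i <? d)%nat then Z.max (lo i) (Z.min (hi i) (y i)) else 0%Z).
    exists x, (fun i => (y i - x i)%Z). unfold x. split; [|split; [|split]].
    + apply HA. split.
      * intros i Hi. destruct (Nat.ltb_spec i d); [lia|auto].
      * intros i Hi. destruct (Nat.ltb_spec i d); [|lia]. specialize (Hlh i); lia.
    + intros i Hi. destruct (Nat.ltb_spec i d); [lia|]. rewrite Hy1 by auto. lia.
    + intros i Hi. destruct (Nat.ltb_spec i d); [|lia]. specialize (Hy2 i Hi). lia.
    + apply functional_extensionality; intro i. lia.
Qed.

Lemma box_sub d lo1 hi1 lo2 hi2 : (forall x, Box d lo1 hi1 x -> Box d lo2 hi2 x) ->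
  (forall i, (lo1 i <= hi1 i)%Z) -> forall i, (i < d)%nat -> (lo2 i <= lo1 i)%Z /\ (hi1 i <= hi2 i)%Z.
Proof.
  intros Hs Hlh i Hi.
  assert (Hcorner : forall a : nat -> Z, (forall j, (lo1 j <= a j <= hi1 j)%Z) ->
            (lo2 i <= a i <= hi2 i)%Z).
  { intros a Ha.
    assert (Hb : Box d lo1 hi1 (fun j => if (j <? d)%nat then a j else 0%Z)).
    { split; intros j Hj; destruct (Nat.ltb_spec j d); try lia. apply Ha. }
    apply Hs in Hb as [_ Hb]. specialize (Hb i Hi). destruct (Nat.ltb_spec i d); lia. }
  split.
  - apply (Hcorner lo1). intro j. specialize (Hlh j). lia.
  - apply (Hcorner hi1). intro j. specialize (Hlh j). lia.
Qed.

Lemma cube_data d A : isCube d A ->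
  { lo : nat -> Z & { hi : nat -> Z | (forall v, A v <-> Box d lo hi v) /\ forall i, (lo i <= hi i)%Z } }.
Proof.
  intros H. apply constructive_indefinite_description in H as [lo H].
  apply constructive_indefinite_description in H as [k [Hk H]].
  exists lo, (fun i => lo i + k i)%Z. split; [exact H|]. intro i. specialize (Hk i). lia.
Qed.

Definition cLo d (A : pset) : nat -> Z :=
  match excluded_middle_informative (isCube d A) with
  | left H => projT1 (cube_data d A H)
  | right _ => fun _ => 0%Z end.
Definition cHi d (A : pset) : nat -> Z :=
  match excluded_middle_informative (isCube d A) with
  | left H => proj1_sig (projT2 (cube_data d A H))
  | right _ => fun _ => 0%Z end.

Lemma cube_spec d A : isCube d A ->
  (forall v, A v <-> Box d (cLo d A) (cHi d A) v) /\ forall i, (cLo d A i <= cHi d A i)%Z.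
Proof.
  intros H. unfold cLo, cHi. destruct excluded_middle_informative as [H'|]; [|contradiction].
  exact (proj2_sig (projT2 (cube_data d A H'))).
Qed.

Section Correction.
Variables (d : nat) (lo hi : nat -> Z) (C : pset) (CC : pset -> Prop)
  (clo chi : pset -> nat -> Z) (f : pt -> Z) (phi : pt -> pt -> R).
Hypothesis Hd : (2 <= d)%nat.
Hypothesis HC : forall v, C v <-> Box d lo hi v.
Hypothesis Hlohi : forall i, (lo i <= hi i)%Z.
Hypothesis HCC : forall C', CC C' ->
  (forall v, C' v <-> Box d (clo C') (chi C') v) /\ (forall i, (clo C' i <= chi C' i)%Z).
Hypothesis Hsub : forall C', CC C' -> forall i, (i < d)%nat ->
  (lo i + 1 <= clo C' i)%Z /\ (chi C' i + 1 <= hi i)%Z.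
Hypothesis Hdisj : forall C' C'', CC C' -> CC C'' -> C' <> C'' ->
  forall x, ~ (nbhd d C' x /\ nbhd d C'' x).
Hypothesis Hphi : isFlow d f phi.

Definition transDirs : list nat := seq 1 (d - 1).

Definition Eint (x y : pt) : Prop :=
  edgesP d C x y /\ ~ (exists C', CC C' /\ edges d (nbhd d C') x y).
Definition EintAt (y : pt) (j : nat) : Prop := Eint y (shift y j 1).

(* Bounds of the neighbourhood box of [C'], and base point of its exit face
   [y 0 = chi C' 0 + 1] (the face through which the sweep leaves it). *)
Definition nlo (C' : pset) (i : nat) : Z := (clo C' i - 1)%Z.
Definition nhi (C' : pset) (i : nat) : Z := (chi C' i + 1)%Z.
Definition exitBase (C' : pset) : pt := fun i => if Nat.eqb i 0 then nhi C' 0 else 0%Z.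
Definition isExit (C' : pset) (y : pt) : Prop := CC C' /\ nbhd d C' y /\ y 0%nat = nhi C' 0.

Definition blo (i : nat) : Z := (lo i - 1)%Z.
Definition bhi (i : nat) : Z := (hi i + 1)%Z.
Definition bottomBase : pt := fun i => if Nat.eqb i 0 then blo 0 else 0%Z.

(* The correction is the boundary of a plaquette field [plaq j y] in [0,1)
   on the (0,j)-plaquette with corners y, y+e_0, y+e_j, y+e_0+e_j; it is built
   slice by slice along direction 0.  On a slice:
   - transverse edges of [Eint] are rounded ([transRound]),
   - on the exit face of a cube [C'] the remaining direction-0 demand
     is rounded by the face lemma ([exitRound]);
   the bottom slice is rounded by the face lemma on the bottom face of nbhd(C). *)
Definition exitRound (c : pt -> R) (j : nat) (y : pt) : R :=
  match excluded_middle_informative (exists C', isExit C' y) with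
  | left H => let C' := proj1_sig (constructive_indefinite_description _ H) in
              faceRound transDirs (nlo C') (nhi C') (exitBase C') c j y
  | right _ => 0
  end.

Definition transRound (hp : nat -> pt -> R) (j : nat) (y : pt) : R :=
  if excluded_middle_informative ((1 <= j)%nat /\ EintAt y j)
  then frac_part (hp j (shift y 0 (-1)) + phi y (shift y j 1)) else 0.

Definition exitDemand (hp : nat -> pt -> R) (v : pt) : R :=
  - phi v (shift v 0 1) - Dv transDirs (transRound hp) v.

Definition nextLayer (hp : nat -> pt -> R) (j : nat) (y : pt) : R :=
  if excluded_middle_informative ((1 <= j)%nat /\ EintAt y j) then transRound hp j y
  else exitRound (exitDemand hp) j y.

Fixpoint layer (s : nat) : nat -> pt -> R :=
  match s with
  | O => faceRound transDirs blo bhi bottomBase (fun v => - phi v (shift v 0 1))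
  | S s' => nextLayer (layer s')
  end.

Definition plaq (j : nat) (y : pt) : R :=
  if andb (blo 0 <=? y 0%nat)%Z (y 0%nat <=? hi 0)%Z
  then layer (Z.to_nat (y 0%nat - blo 0)) j y else 0.

Definition bdry (x : pt) (j : nat) : R :=
  if Nat.eqb j 0 then Dv transDirs plaq x else plaq j (shift x 0 (-1)) - plaq j x.

Definition eta (x y : pt) : R :=
  sumL (seq 0 d) (fun j =>
      (if excluded_middle_informative (y = shift x j 1) then bdry x j else 0)
    - (if excluded_middle_informative (y = shift x j (-1)) then bdry y j else 0)).

Definition psi (x y : pt) : R := phi x y + eta x y.

Lemma d_pos : (0 < d)%nat. Proof. lia. Qed.
Lemma in_transDirs j : In j transDirs <-> (1 <= j < d)%nat.
Proof. unfold transDirs. rewrite in_seq. lia. Qed.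
Lemma NoDup_transDirs : NoDup transDirs. Proof. apply seq_NoDup. Qed.
Lemma seq0d : seq 0 d = 0%nat :: transDirs.
Proof. unfold transDirs. destruct d as [|d']; [lia|]. simpl. f_equal. f_equal. lia. Qed.

Ltac destruct_em := match goal with
  |- context [excluded_middle_informative ?P] => destruct (excluded_middle_informative P) end.

(* psi is an f-flow: eta is antisymmetric and, being a boundary, divergence free. *)
Lemma eta_pos x j : (j < d)%nat -> eta x (shift x j 1) = bdry x j.
Proof.
  intros Hj. unfold eta. rewrite sumL_minus.
  rewrite (sumL_ext _ (fun j0 => if excluded_middle_informative (shift x j 1 = shift x j0 1)
                                  then bdry x j0 else 0)
             (fun j0 => if excluded_middle_informative (j0 = j) then bdry x j else 0)).
  2:{ intros j0 _. destruct_em; destruct_em; auto; try subst; try tauto.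
      exfalso. apply (shift_ne x j j0 1 1); auto; lia. }
  rewrite (sumL_indicator _ (fun j0 => j0 = j) j); auto.
  - rewrite sumL_indicator0; [ring|]. intros b _ E. apply (shift_ne x j b 1 (-1)); auto; lia.
  - apply seq_NoDup.
  - apply seq0_in; auto.
Qed.

Lemma eta_neg x j : (j < d)%nat -> eta x (shift x j (-1)) = - bdry (shift x j (-1)) j.
Proof.
  intros Hj. unfold eta. rewrite sumL_minus.
  rewrite (sumL_ext _ (fun j0 => if excluded_middle_informative (shift x j (-1) = shift x j0 (-1))
                                  then bdry (shift x j (-1)) j0 else 0)
             (fun j0 => if excluded_middle_informative (j0 = j) then bdry (shift x j (-1)) j else 0)).
  2:{ intros j0 _. destruct_em; destruct_em; auto; try subst; try tauto.
      exfalso. apply (shift_ne x j j0 (-1) (-1)); auto; lia. }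
  rewrite (sumL_indicator _ (fun j0 => j0 = j) j); auto.
  - rewrite sumL_indicator0; [ring|]. intros b _ E. apply (shift_ne x j b (-1) 1); auto; lia.
  - apply seq_NoDup.
  - apply seq0_in; auto.
Qed.

Lemma psi_anti x y : adj d x y -> psi x y = - psi y x.
Proof.
  intros Ha. unfold psi. rewrite (proj1 Hphi x y Ha).
  destruct Ha as [Hx [j [Hj [->| ->]]]].
  - replace (eta (shift x j 1) x) with (eta (shift x j 1) (shift (shift x j 1) j (-1)))
      by (rewrite shift_inv1; auto).
    rewrite eta_pos, eta_neg, shift_inv1 by auto. ring.
  - replace (eta (shift x j (-1)) x) with (eta (shift x j (-1)) (shift (shift x j (-1)) j 1))
      by (rewrite shift_inv2; auto).
    rewrite eta_neg, eta_pos by auto. ring.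
Qed.

Lemma outflow_eta x : outflow d eta x = 0.
Proof.
  change (sumL (seq 0 d) (fun k => eta x (shift x k 1) + eta x (shift x k (-1))) = 0).
  rewrite (sumL_ext _ _ (fun k => bdry x k - bdry (shift x k (-1)) k)).
  2:{ intros k Hk. apply seq0_in in Hk. rewrite eta_pos, eta_neg by auto. ring. }
  rewrite seq0d, sumL_cons. unfold bdry at 1 2. rewrite Nat.eqb_refl.
  rewrite (sumL_ext _ _ (fun j => (plaq j (shift x 0 (-1)) - plaq j x) -
                                  (plaq j (shift (shift x j (-1)) 0 (-1)) - plaq j (shift x j (-1))))).
  2:{ intros j Hj. apply in_transDirs in Hj. unfold bdry.
      rewrite (proj2 (Nat.eqb_neq j 0)) by lia. reflexivity. }
  unfold Dv. rewrite <- sumL_minus, <- sumL_plus.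
  rewrite (sumL_ext _ _ (fun _ => 0)); [apply sumL_zero|].
  intros j _. rewrite (shift_comm x j 0 (-1) (-1)). ring.
Qed.

Lemma psi_flow : isFlow d f psi.
Proof.
  split; [apply psi_anti|].
  intros x Hx. rewrite (proj2 Hphi x Hx). unfold psi.
  rewrite outflow_add, outflow_eta. ring.
Qed.

(* Each plaquette value lies in [0,1), hence each correction is at most d-1. *)
Lemma layer_bounds s j y : 0 <= layer s j y < 1.
Proof.
  revert j y; induction s; intros j y; simpl.
  - apply faceRound_bounds.
  - unfold nextLayer, transRound, exitRound. repeat destruct_em; try apply frac_bounds; try apply faceRound_bounds; lra.
Qed.

Lemma plaq_bounds j y : 0 <= plaq j y < 1.
Proof. unfold plaq. destruct (andb _ _); [apply layer_bounds|lra]. Qed.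

Lemma bdry_bound a j : (j < d)%nat -> Rabs (bdry a j) <= INR d.
Proof.
  intros Hj. unfold bdry. destruct (Nat.eqb_spec j 0).
  - unfold Dv. eapply Rle_trans; [apply (sumL_abs_le _ _ 1)|].
    + intros j' _. destruct (plaq_bounds j' a), (plaq_bounds j' (shift a j' (-1))).
      apply Rabs_le. lra.
    + unfold transDirs. rewrite length_seq, Rmult_1_r. apply le_INR. lia.
  - destruct (plaq_bounds j a), (plaq_bounds j (shift a 0 (-1))).
    apply Rle_trans with 1; [apply Rabs_le; lra|].
    replace 1 with (INR 1) by reflexivity. apply le_INR. lia.
Qed.

Lemma nbhdC y : nbhd d C y <-> Box d blo bhi y.
Proof. apply nbhd_box; auto. Qed.
Lemma nbhdH C' y : CC C' -> (nbhd d C' y <-> Box d (nlo C') (nhi C') y).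
Proof. intros H. apply nbhd_box; apply HCC; auto. Qed.
Lemma cube_box C' v : CC C' -> (C' v <-> Box d (clo C') (chi C') v).
Proof. intros H; apply HCC; auto. Qed.
Lemma cube_inner0 C' : CC C' -> (lo 0 + 1 <= clo C' 0)%Z /\ (chi C' 0 + 1 <= hi 0)%Z.
Proof. intros H; apply Hsub; auto; lia. Qed.
Lemma C_coords v : C v -> inZd d v /\ forall i, (i < d)%nat -> (lo i <= v i <= hi i)%Z.
Proof. apply HC. Qed.

Lemma near_nbhd C' u v : CC C' -> C' u -> inZd d v ->
  (forall i, (i < d)%nat -> (u i - 1 <= v i <= u i + 1)%Z) -> nbhd d C' v.
Proof.
  intros HC' Hu Hv Hn. apply nbhdH; auto. apply cube_box in Hu as [Hu1 Hu2]; auto.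
  split; auto. intros i Hi. specialize (Hu2 i Hi); specialize (Hn i Hi). unfold nlo, nhi; lia.
Qed.

Lemma nbhdH_C C' v : CC C' -> nbhd d C' v -> C v.
Proof.
  intros HC' Hv. apply nbhdH in Hv as [Hv Hb]; auto. apply HC. split; auto.
  intros i Hi. specialize (Hb i Hi). destruct (Hsub C' HC' i Hi). unfold nlo, nhi in Hb. lia.
Qed.

Lemma exit_coord C' v : CC C' -> nbhd d C' v -> ~ nbhd d C' (shift v 0 1) -> v 0%nat = nhi C' 0.
Proof.
  intros HC' Hv Hn. apply nbhdH in Hv as [Hv Hb]; auto.
  assert (Hb0 := Hb 0%nat d_pos). unfold nlo, nhi in *.
  destruct (Z.eq_dec (v 0%nat) (chi C' 0 + 1)) as [E|Ne]; auto. exfalso. apply Hn.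
  apply nbhdH; auto. split; [apply inZd_shift; auto; lia|].
  intros i Hi. unfold shift. destruct (Nat.eqb_spec i 0); [subst; unfold nlo, nhi; lia|]. apply Hb; auto.
Qed.

Lemma inBox_transDirs l u p y : inBoxI transDirs l u p y <->
  (forall i, (1 <= i < d)%nat -> (l i <= y i <= u i)%Z) /\ y 0%nat = p 0%nat /\
  (forall i, (d <= i)%nat -> y i = p i).
Proof.
  unfold inBoxI. split.
  - intros [H1 H2]. split; [|split].
    + intros i Hi; apply H1, in_transDirs; auto.
    + apply H2. rewrite in_transDirs. lia.
    + intros i Hi; apply H2. rewrite in_transDirs. lia.
  - intros [H1 [H2 H3]]. split.
    + intros i Hi; apply H1, in_transDirs; auto.
    + intros i Hi. rewrite in_transDirs in Hi. destruct i as [|i]; auto. apply H3. lia.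
Qed.

Lemma exitBox_nbhd C' y : CC C' -> inBoxI transDirs (nlo C') (nhi C') (exitBase C') y ->
  nbhd d C' y /\ y 0%nat = nhi C' 0 /\ inZd d y.
Proof.
  intros HC' Hb. apply inBox_transDirs in Hb as [B1 [B0 Bd]].
  unfold exitBase in B0. rewrite Nat.eqb_refl in B0.
  assert (Hy : inZd d y).
  { intros i Hi. rewrite Bd by lia. unfold exitBase. destruct (Nat.eqb_spec i 0); lia. }
  split; [|split; auto].
  apply nbhdH; auto. split; auto. intros i Hi.
  destruct (Nat.eq_dec i 0) as [->|]; [|apply B1; lia].
  unfold nlo, nhi in *. destruct (HCC C' HC') as [_ Hl]. specialize (Hl 0%nat). lia.
Qed.

Lemma EintAt_char y j : inZd d y -> (j < d)%nat ->
  (EintAt y j <-> (C y \/ C (shift y j 1)) /\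
              ~ (exists C', CC C' /\ nbhd d C' y /\ nbhd d C' (shift y j 1))).
Proof.
  intros Hy Hj. unfold EintAt, Eint, edgesP, edges. split.
  - intros [[_ [j' [Hj' [E H]]]] H2]. split; [exact H|].
    intros [C' [HC' [H3 H4]]]. apply H2. exists C'. split; [auto|]. split; [auto|].
    exists j. repeat split; auto.
  - intros [H1 H2]. split.
    + split; auto. exists j; repeat split; auto.
    + intros [C' [HC' [_ [j' [Hj' [E [H3 H4]]]]]]]. apply H2. exists C'. split; [auto|split; [auto|auto]].
Qed.

Lemma EintAt_inZd y j : EintAt y j -> inZd d y /\ (j < d)%nat.
Proof.
  intros [[Hy [j' [Hj' [E _]]]] _]. split; auto.
  destruct (Nat.eq_dec j j'); [subst; auto|].
  exfalso. eapply (shift_ne y j j' 1 1); eauto; lia.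
Qed.

Lemma EintAt_intro y j : inZd d y -> (j < d)%nat -> (C y \/ C (shift y j 1)) ->
  (forall C', CC C' -> ~ nbhd d C' y \/ ~ nbhd d C' (shift y j 1)) -> EintAt y j.
Proof.
  intros Hy Hj Hc Hn. apply EintAt_char; auto. split; auto.
  intros [C' [HC' [H1 H2]]]. destruct (Hn C' HC'); auto.
Qed.

Lemma plaq_layer y s j : y 0%nat = (blo 0 + Z.of_nat s)%Z -> (y 0%nat <= hi 0)%Z ->
  plaq j y = layer s j y.
Proof.
  intros H1 H2. unfold plaq.
  destruct (Z.leb_spec (blo 0) (y 0%nat)), (Z.leb_spec (y 0%nat) (hi 0)); try lia.
  simpl. f_equal. lia.
Qed.


(* Nonzero plaquette values occur only on
   free plaquettes, which gives the support properties of the correction. *)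
Definition free (u : pt) : Prop := nbhd d C u /\ forall C', CC C' -> ~ C' u.
Definition freePlaq (j : nat) (y : pt) : Prop :=
  (1 <= j < d)%nat /\ inZd d y /\
  forall a b : Z, (0 <= a <= 1)%Z -> (0 <= b <= 1)%Z -> free (shift (shift y 0 a) j b).

Lemma plaq_coord y j a b i : (1 <= j)%nat ->
  shift (shift y 0 a) j b i =
    (y i + (if Nat.eqb i 0 then a else 0) + (if Nat.eqb i j then b else 0))%Z.
Proof. intros Hj. unfold shift. destruct (Nat.eqb_spec i j), (Nat.eqb_spec i 0); subst; try lia. Qed.

Lemma plaq_corner_nbhdC y j a b : (1 <= j < d)%nat -> inZd d y ->
  (blo 0 <= y 0%nat <= hi 0)%Z ->
  (forall i, (1 <= i < d)%nat -> (blo i <= y i)%Z /\ (y i + (if Nat.eqb i j then 1 else 0) <= bhi i)%Z) ->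
  (0 <= a <= 1)%Z -> (0 <= b <= 1)%Z -> nbhd d C (shift (shift y 0 a) j b).
Proof.
  intros Hj Hy H0 Hi Ha Hb. apply nbhdC. split.
  { apply inZd_shift; [lia|]. apply inZd_shift; auto; lia. }
  intros i Hid. rewrite plaq_coord by lia. unfold blo, bhi in *.
  destruct (Nat.eqb_spec i 0) as [->|Hi0].
  - rewrite (proj2 (Nat.eqb_neq 0 j)) by lia. lia.
  - specialize (Hi i ltac:(lia)). destruct (Nat.eqb i j); lia.
Qed.

(* Bottom slice: the rounding field lives on the bottom face of nbhd(C),
   below every cube of [CC]. *)
Lemma layer0_free c j y : faceRound transDirs blo bhi bottomBase c j y <> 0 -> freePlaq j y.
Proof.
  intros Hne. apply faceRound_supp in Hne as [Hj [Hb1 Hb2]].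
  apply in_transDirs in Hj. apply inBox_transDirs in Hb1 as [B1 [B0 Bd]].
  apply inBox_transDirs in Hb2 as [B1' _].
  unfold bottomBase in B0; simpl in B0.
  assert (Hy : inZd d y).
  { intros i Hi. rewrite Bd by lia. unfold bottomBase. destruct (Nat.eqb_spec i 0); lia. }
  split; [lia|]. split; [auto|]. intros a b Ha Hb. split.
  - apply plaq_corner_nbhdC; auto.
    + pose proof (Hlohi 0%nat). unfold blo in *. lia.
    + intros i Hi. specialize (B1 i Hi). specialize (B1' i Hi).
      destruct (Nat.eqb_spec i j) as [->|]; [rewrite shift_at in B1'|]; lia.
  - intros C' HC' HCu. apply cube_box in HCu as [_ Hu']; auto. specialize (Hu' 0%nat d_pos).
    rewrite plaq_coord in Hu' by lia. rewrite Nat.eqb_refl, (proj2 (Nat.eqb_neq 0 j)) in Hu' by lia.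
    destruct (cube_inner0 C' HC'). unfold blo in B0. lia.
Qed.

(* Transverse edges of [Eint]: a cube containing a corner of the plaquette
   would have both ends of the edge in its neighbourhood. *)
Lemma transverse_free y j : (1 <= j)%nat -> EintAt y j -> freePlaq j y.
Proof.
  intros Hj1 HE. destruct (EintAt_inZd _ _ HE) as [Hy Hjd].
  destruct (proj1 (EintAt_char y j Hy Hjd) HE) as [Hc Hn].
  assert (Hco : forall i, (i < d)%nat -> (lo i - 1 <= y i <= hi i)%Z /\ (i <> j -> (lo i <= y i)%Z)).
  { intros i Hi. destruct Hc as [Hc|Hc]; apply C_coords in Hc as [_ Hc]; specialize (Hc i Hi).
    - lia.
    - destruct (Nat.eq_dec i j); [subst; rewrite shift_at in Hc; lia|].
      rewrite shift_other in Hc; auto; lia. }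
  split; [lia|]. split; [auto|]. intros a b Ha Hb. split.
  - apply plaq_corner_nbhdC; auto.
    + destruct (Hco 0%nat d_pos) as [H1 H2]. specialize (H2 ltac:(lia)). unfold blo. lia.
    + intros i Hi. destruct (Hco i ltac:(lia)). unfold blo, bhi.
      destruct (Nat.eqb_spec i j); lia.
  - intros C' HC' HCu. apply Hn. exists C'. split; [auto|split].
    + apply (near_nbhd C' _ y HC' HCu Hy). intros i Hi. rewrite plaq_coord by lia.
      destruct (Nat.eqb_spec i 0), (Nat.eqb_spec i j); lia.
    + apply (near_nbhd C' _ _ HC' HCu). { apply inZd_shift; auto. }
      intros i Hi. rewrite plaq_coord by lia. unfold shift.
      destruct (Nat.eqb_spec i 0), (Nat.eqb_spec i j); lia.
Qed.

(* Exit faces: the rounding field lives on the exit face of a cube [C3], just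
   above [C3] and, by disjointness of neighbourhoods, away from other cubes. *)
Lemma exitRound_free c j y : exitRound c j y <> 0 -> freePlaq j y.
Proof.
  unfold exitRound. intros Hne.
  destruct (excluded_middle_informative (exists C', isExit C' y)) as [Hex|]; [|lra].
  destruct (proj2_sig (constructive_indefinite_description _ Hex)) as [HC3 _].
  set (C3 := proj1_sig (constructive_indefinite_description _ Hex)) in *.
  apply faceRound_supp in Hne as [Hj [Hb1 Hb2]].
  assert (Hny : nbhd d C3 y) by (apply exitBox_nbhd in Hb1 as [? _]; auto).
  apply in_transDirs in Hj. apply inBox_transDirs in Hb1 as [B1 [B0 Bd]].
  apply inBox_transDirs in Hb2 as [B1' _].
  unfold exitBase in B0. rewrite Nat.eqb_refl in B0.
  assert (Hy : inZd d y).
  { intros i Hi. rewrite Bd by lia. unfold exitBase. destruct (Nat.eqb_spec i 0); lia. }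
  assert (Hs3 := Hsub C3 HC3).
  split; [lia|]. split; [auto|]. intros a b Ha Hb. split.
  - apply plaq_corner_nbhdC; auto.
    + destruct (Hs3 0%nat d_pos). pose proof (proj2 (HCC C3 HC3) 0%nat).
      unfold blo, nhi in *. lia.
    + intros i Hi. specialize (B1 i Hi). specialize (B1' i Hi). destruct (Hs3 i ltac:(lia)).
      unfold blo, bhi, nlo, nhi in *.
      destruct (Nat.eqb_spec i j) as [->|]; [rewrite shift_at in B1'|]; lia.
  - intros C' HC' HCu. destruct (classic (C' = C3)) as [->|Hne'].
    + apply cube_box in HCu as [_ Hu']; auto. specialize (Hu' 0%nat d_pos).
      rewrite plaq_coord in Hu' by lia. rewrite Nat.eqb_refl, (proj2 (Nat.eqb_neq 0 j)) in Hu' by lia.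
      unfold nhi in B0. lia.
    + apply (Hdisj C' C3 HC' HC3 Hne' y). split; auto.
      apply (near_nbhd C' _ y HC' HCu Hy). intros i Hi. rewrite plaq_coord by lia.
      destruct (Nat.eqb_spec i 0), (Nat.eqb_spec i j); lia.
Qed.

Lemma plaq_free j y : plaq j y <> 0 -> freePlaq j y.
Proof.
  unfold plaq. destruct (andb _ _); [|lra].
  generalize (Z.to_nat (y 0%nat - blo 0)). intros [|s]; simpl.
  - apply layer0_free.
  - unfold nextLayer. destruct excluded_middle_informative as [[Hj HE]|_].
    + intros _. apply transverse_free; auto.
    + apply exitRound_free.
Qed.

Lemma bdry_free x j : inZd d x -> (j < d)%nat -> bdry x j <> 0 -> free x /\ free (shift x j 1).
Proof.
  intros Hx Hj Hne.
  assert (Corner : forall j' y a b a' b', plaq j' y <> 0 ->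
            (0 <= a <= 1)%Z -> (0 <= b <= 1)%Z -> (0 <= a' <= 1)%Z -> (0 <= b' <= 1)%Z ->
            free (shift (shift y 0 a) j' b) /\ free (shift (shift y 0 a') j' b')).
  { intros j' y a b a' b' Hp Ha Hb Ha' Hb'. apply plaq_free in Hp as [_ [_ Hp]]. split; auto. }
  unfold bdry in Hne. destruct (Nat.eqb_spec j 0) as [->|Hj0].
  - apply sumL_nz in Hne as [j' [Hj' Hne]].
    destruct (Req_dec (plaq j' x) 0) as [H0|H0].
    + assert (Hne' : plaq j' (shift x j' (-1)) <> 0) by (intro; apply Hne; lra).
      destruct (Corner j' _ 0%Z 1%Z 1%Z 1%Z Hne') as [G1 G2]; try lia.
      rewrite shift_zero, shift_inv2 in G1. rewrite shift_comm, shift_inv2 in G2. split; assumption.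
    + destruct (Corner j' _ 0%Z 0%Z 1%Z 0%Z H0) as [G1 G2]; try lia.
      rewrite !shift_zero in G1. rewrite !shift_zero in G2. split; assumption.
  - destruct (Req_dec (plaq j x) 0) as [H0|H0].
    + assert (Hne' : plaq j (shift x 0 (-1)) <> 0) by (intro; apply Hne; lra).
      destruct (Corner j _ 1%Z 0%Z 1%Z 1%Z Hne') as [G1 G2]; try lia.
      rewrite shift_zero, shift_inv2 in G1. rewrite shift_inv2 in G2. split; assumption.
    + destruct (Corner j _ 0%Z 0%Z 0%Z 1%Z H0) as [G1 G2]; try lia.
      rewrite !shift_zero in G1. rewrite !shift_zero in G2. split; assumption.
Qed.

Lemma psi_pos x j : (j < d)%nat -> psi x (shift x j 1) = phi x (shift x j 1) + bdry x j.
Proof. intros; unfold psi; rewrite eta_pos; auto. Qed.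

Lemma psi_pos0 x : psi x (shift x 0 1) = phi x (shift x 0 1) + Dv transDirs plaq x.
Proof. rewrite psi_pos by lia. unfold bdry. rewrite Nat.eqb_refl. auto. Qed.

(* Transverse edges of [Eint] are integral: there [plaq] was chosen as the
   fractional part of the accumulated flow. *)
Lemma transverse_int y j : (1 <= j)%nat -> EintAt y j -> isZ (psi y (shift y j 1)).
Proof.
  intros Hj1 HE. destruct (EintAt_inZd _ _ HE) as [Hy Hjd].
  destruct (proj1 (EintAt_char y j Hy Hjd) HE) as [Hc _].
  assert (Hy0 : (lo 0 <= y 0%nat <= hi 0)%Z).
  { destruct Hc as [Hc|Hc]; apply C_coords in Hc as [_ Hc]; specialize (Hc 0%nat d_pos); auto.
    rewrite shift_other in Hc by lia. auto. }
  set (s := Z.to_nat (y 0%nat - lo 0)).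
  rewrite psi_pos by auto. unfold bdry. rewrite (proj2 (Nat.eqb_neq j 0)) by lia.
  rewrite (plaq_layer y (S s)) by (unfold s, blo; lia).
  rewrite (plaq_layer (shift y 0 (-1)) s) by (rewrite shift_at; unfold s, blo; lia).
  simpl. unfold nextLayer, transRound.
  destruct (excluded_middle_informative ((1 <= j)%nat /\ EintAt y j)) as [_|Hn]; [|tauto].
  set (r := layer s j (shift y 0 (-1)) + phi y (shift y j 1)).
  replace (phi y (shift y j 1) + (layer s j (shift y 0 (-1)) - frac_part r))
    with (r - frac_part r) by (unfold r; ring).
  apply frac_isZ.
Qed.

(* On the bottom face of nbhd(C) the direction-0 edges are integral, by the
   face lemma (the top corner of that face lies outside [C]). *)
Lemma bottom_face_int x : inZd d x -> x 0%nat = blo 0 ->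
  (forall i, (1 <= i < d)%nat -> (lo i <= x i <= hi i)%Z) ->
  isZ (psi x (shift x 0 1)).
Proof.
  intros Hx Hx0 Hxi. rewrite psi_pos0.
  set (c := fun v => - phi v (shift v 0 1)).
  assert (HD : Dv transDirs plaq x = Dv transDirs (faceRound transDirs blo bhi bottomBase c) x).
  { unfold Dv. apply sumL_ext. intros j Hj. apply in_transDirs in Hj.
    pose proof (Hlohi 0%nat).
    rewrite (plaq_layer x 0) by (unfold blo in *; simpl; lia).
    rewrite (plaq_layer (shift x j (-1)) 0) by (rewrite shift_other by lia; unfold blo in *; simpl; lia).
    reflexivity. }
  rewrite HD. replace (phi x (shift x 0 1) + Dv transDirs (faceRound transDirs blo bhi bottomBase c) x)
    with (Dv transDirs (faceRound transDirs blo bhi bottomBase c) x - c x) by (unfold c; ring).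
  apply faceRound_spec.
  - apply NoDup_transDirs.
  - intros i _. unfold blo, bhi. pose proof (Hlohi i). lia.
  - apply inBox_transDirs. split; [|split].
    + intros i Hi. specialize (Hxi i Hi). unfold blo, bhi. lia.
    + unfold bottomBase. simpl. auto.
    + intros i Hi. rewrite Hx by lia. unfold bottomBase. destruct (Nat.eqb_spec i 0); lia.
  - intro E. assert (E1 := f_equal (fun v => v 1%nat) E). simpl in E1.
    unfold vstar in E1. destruct (in_dec Nat.eq_dec 1%nat transDirs) as [_|Hn]; [|apply Hn, in_transDirs; lia].
    specialize (Hxi 1%nat ltac:(lia)). unfold bhi in E1. lia.
Qed.

Lemma exitRound_near C' c j y : CC C' -> nbhd d C' y \/ nbhd d C' (shift y j 1) ->
  exitRound c j y = faceRound transDirs (nlo C') (nhi C') (exitBase C') c j y.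
Proof.
  intros HC' Hnear. unfold exitRound.
  destruct (excluded_middle_informative (exists C'', isExit C'' y)) as [Hex|Hnex].
  - destruct (proj2_sig (constructive_indefinite_description _ Hex)) as [HC3 [Hn3 _]].
    cbv zeta. set (C3 := proj1_sig (constructive_indefinite_description _ Hex)) in *.
    destruct (classic (C3 = C')) as [->|Ne]; [reflexivity|].
    assert (L : faceRound transDirs (nlo C3) (nhi C3) (exitBase C3) c j y = 0).
    { apply NNPP; intro Hne. apply faceRound_supp in Hne as [_ [Hb1 Hb2]].
      apply exitBox_nbhd in Hb1 as [Hb1 _]; auto. apply exitBox_nbhd in Hb2 as [Hb2 _]; auto.
      destruct Hnear as [Hv|Hv]; [apply (Hdisj C3 C' HC3 HC' Ne y)|apply (Hdisj C3 C' HC3 HC' Ne (shift y j 1))];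
        split; auto. }
    assert (Rr : faceRound transDirs (nlo C') (nhi C') (exitBase C') c j y = 0).
    { apply NNPP; intro Hne. apply faceRound_supp in Hne as [_ [Hb1 _]].
      apply exitBox_nbhd in Hb1 as [Hb1 _]; auto.
      apply (Hdisj C3 C' HC3 HC' Ne y). split; auto. }
    rewrite L, Rr; reflexivity.
  - symmetry. apply NNPP; intro Hne.
    apply faceRound_supp in Hne as [_ [Hb1 _]]. apply exitBox_nbhd in Hb1 as [Hb1 [Hb0 _]]; auto.
    apply Hnex. exists C'. split; auto.
Qed.

Lemma plaq_on_exit_face C' v j y : CC C' -> nbhd d C' v -> v 0%nat = nhi C' 0 ->
  In j transDirs -> (y = v \/ shift y j 1 = v) ->
  let s := Z.to_nat (v 0%nat - lo 0) in
  plaq j y = transRound (layer s) j y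
           + faceRound transDirs (nlo C') (nhi C') (exitBase C') (exitDemand (layer s)) j y.
Proof.
  intros HC' Hnv Hv0 Hj Hyv s. apply in_transDirs in Hj.
  assert (Hy0 : y 0%nat = v 0%nat).
  { destruct Hyv as [->|E]; auto. rewrite <- E. rewrite shift_other; auto; lia. }
  assert (Hyz : inZd d y).
  { destruct (proj1 (nbhdH C' v HC') Hnv) as [Hv _].
    destruct Hyv as [->|E]; auto. rewrite <- (shift_inv1 y j), E. apply inZd_shift; auto; lia. }
  destruct (cube_inner0 C' HC'). pose proof (proj2 (HCC C' HC') 0%nat).
  rewrite (plaq_layer y (S s)) by (unfold s, blo, nhi in *; lia). simpl. unfold nextLayer.
  destruct (excluded_middle_informative ((1 <= j)%nat /\ EintAt y j)) as [[Hj1 HE]|HnE].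
  - assert (faceRound transDirs (nlo C') (nhi C') (exitBase C') (exitDemand (layer s)) j y = 0).
    { apply NNPP; intro Hne. apply faceRound_supp in Hne as [_ [Hb1 Hb2]].
      apply exitBox_nbhd in Hb1 as [Hb1 _]; auto. apply exitBox_nbhd in Hb2 as [Hb2 _]; auto.
      apply (EintAt_char y j Hyz ltac:(lia)) in HE as [_ HE]. apply HE. exists C'; auto. }
    lra.
  - assert (Ht : transRound (layer s) j y = 0) by (unfold transRound; destruct_em; [contradiction|auto]).
    rewrite Ht, Rplus_0_l. apply exitRound_near; auto.
    destruct Hyv as [<-|<-]; auto.
Qed.

(* On the exit face of [C'], away from its top corner, the direction-0 edges
   are integral by the face lemma applied to the remaining demand. *)
Lemma exit_face_int C' v : CC C' -> nbhd d C' v -> v 0%nat = nhi C' 0 ->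
  v <> vstar transDirs (nhi C') (exitBase C') -> isZ (psi v (shift v 0 1)).
Proof.
  intros HC' Hnv Hv0 Hvs. rewrite psi_pos0.
  destruct (proj1 (nbhdH C' v HC') Hnv) as [Hv Hvb].
  set (s := Z.to_nat (v 0%nat - lo 0)).
  set (FS := faceRound transDirs (nlo C') (nhi C') (exitBase C') (exitDemand (layer s))).
  assert (HD : Dv transDirs plaq v = Dv transDirs (transRound (layer s)) v + Dv transDirs FS v).
  { unfold Dv. rewrite <- sumL_plus. apply sumL_ext. intros j Hj.
    rewrite (plaq_on_exit_face C' v j v), (plaq_on_exit_face C' v j (shift v j (-1))); auto.
    - unfold FS, s. ring.
    - right. apply shift_inv2. }
  rewrite HD.
  replace (phi v (shift v 0 1) + (Dv transDirs (transRound (layer s)) v + Dv transDirs FS v))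
    with (Dv transDirs FS v - exitDemand (layer s) v) by (unfold exitDemand; ring).
  apply faceRound_spec.
  - apply NoDup_transDirs.
  - intros i _. unfold nlo, nhi. specialize (proj2 (HCC C' HC') i). lia.
  - apply inBox_transDirs. split; [|split].
    + intros i Hi. apply Hvb. lia.
    + unfold exitBase. rewrite Nat.eqb_refl. auto.
    + intros i Hi. rewrite Hv by lia. unfold exitBase. destruct (Nat.eqb_spec i 0); lia.
  - exact Hvs.
Qed.

Definition fwdIntBelow (t : Z) : Prop :=
  forall x, inZd d x -> (x 0%nat < t)%Z -> EintAt x 0 -> isZ (psi x (shift x 0 1)).

(* At the top corner of the exit face of [C'], use the flux lemma on nbhd(C'):
   all other edges through its boundary are integral (transverse ones lie in
   [Eint], entering direction-0 ones lie in lower slices). *)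
Lemma corner_int C' x : CC C' -> nbhd d C' x -> ~ nbhd d C' (shift x 0 1) ->
  x = vstar transDirs (nhi C') (exitBase C') -> fwdIntBelow (x 0%nat) -> isZ (psi x (shift x 0 1)).
Proof.
  intros HC' Hx Hnx Ex IH.
  assert (Hx0 := exit_coord C' x HC' Hx Hnx).
  assert (HnZ : forall v, nbhd d C' v -> inZd d v) by (intros v Hv; apply nbhdH in Hv as [Hv _]; auto).
  apply (flux_lemma d (boxList (seq 0 d) (nlo C') (nhi C') (fun _ => 0%Z)) (nbhd d C') psi x); auto.
  - apply boxList_NoDup, seq_NoDup.
  - intro v. rewrite boxList_In by apply seq_NoDup. rewrite Box_seq0. symmetry. apply nbhdH; auto.
  - apply psi_anti.
  - intros v Hv. rewrite <- (proj2 psi_flow v (HnZ v Hv)). apply isZ_IZR.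
  - intros k v Hk Hv Hnv. apply transverse_int; [lia|]. apply EintAt_intro; auto; [lia| |].
    + left. eapply nbhdH_C; eauto.
    + intros C'' HC''. destruct (classic (C'' = C')) as [->|Ne]; [right; auto|].
      left. intro. apply (Hdisj C'' C' HC'' HC' Ne v); auto.
  - intros k u Hk Hu Hnu Hsu.
    assert (HEu : EintAt u k).
    { apply EintAt_intro; auto. right. eapply nbhdH_C; eauto.
      intros C'' HC''. destruct (classic (C'' = C')) as [->|Ne]; [left; auto|].
      right. intro. apply (Hdisj C'' C' HC'' HC' Ne (shift u k 1)); auto. }
    destruct (Nat.eq_dec k 0) as [->|Hk0]; [|apply transverse_int; auto; lia].
    apply IH; auto.
    destruct (proj1 (nbhdH C' _ HC') Hsu) as [_ Hub]. specialize (Hub 0%nat d_pos).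
    rewrite shift_at in Hub. pose proof (proj2 (HCC C' HC') 0%nat). unfold nlo, nhi in *. lia.
  - intros v Hv Hnv Hne. apply (exit_face_int C'); auto.
    + apply exit_coord; auto.
    + rewrite <- Ex; auto.
  - lia.
Qed.

(* Away from the cubes, all other edges at [x] are integral (transverse ones
   lie in [Eint], the backward one lies in a lower slice), so flow
   conservation forces the forward edge to be integral. *)
Lemma conservation_int x : inZd d x -> C x -> (forall C', CC C' -> ~ nbhd d C' x) ->
  fwdIntBelow (x 0%nat) -> isZ (psi x (shift x 0 1)).
Proof.
  intros Hx HCx Hno IH.
  assert (Hback : forall k, (k < d)%nat -> EintAt (shift x k (-1)) k).
  { intros k Hk. apply EintAt_intro; [apply inZd_shift; auto|auto| rewrite shift_inv2; auto|].
    intros C'' HC''. right. rewrite shift_inv2. auto. }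
  assert (Hbackint : forall k, (k < d)%nat -> isZ (psi x (shift x k (-1)))).
  { intros k Hk. rewrite (psi_anti x (shift x k (-1))).
    2:{ split; auto. exists k; split; [lia|right; auto]. }
    apply isZ_opp. rewrite <- (shift_inv2 x k) at 2.
    destruct (Nat.eq_dec k 0) as [->|Hk0].
    - apply IH; [apply inZd_shift; auto; lia|rewrite shift_at; lia|auto].
    - apply transverse_int; [lia|auto]. }
  assert (Hrest : isZ (sumL transDirs (fun k => psi x (shift x k 1) + psi x (shift x k (-1))))).
  { apply sumL_isZ. intros k Hk. apply in_transDirs in Hk. apply isZ_add; [|apply Hbackint; lia].
    apply transverse_int; [lia|]. apply EintAt_intro; [auto|lia|left; auto|intros C'' HC''; left; auto]. }
  assert (Hf := proj2 psi_flow x Hx). unfold outflow in Hf. fold (sumL (seq 0 d)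
    (fun k => psi x (shift x k 1) + psi x (shift x k (-1)))) in Hf.
  rewrite seq0d, sumL_cons in Hf.
  replace (psi x (shift x 0 1)) with
    (IZR (f x) - psi x (shift x 0 (-1)) - sumL transDirs (fun k => psi x (shift x k 1) + psi x (shift x k (-1))))
    by (rewrite Hf; ring).
  apply isZ_sub; [apply isZ_sub; [apply isZ_IZR|apply Hbackint; lia]|auto].
Qed.

(* One induction step: a direction-0 edge of [Eint] lies on the bottom face of
   nbhd(C), on an exit face (at its top corner or not), or away from all cubes. *)
Lemma forward_int_step x : inZd d x -> EintAt x 0 -> fwdIntBelow (x 0%nat) ->
  isZ (psi x (shift x 0 1)).
Proof.
  intros Hx HE IH.
  destruct (proj1 (EintAt_char x 0 Hx d_pos) HE) as [Hc Hn].
  assert (Hx0 : (blo 0 <= x 0%nat)%Z).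
  { destruct Hc as [Hc|Hc]; apply C_coords in Hc as [_ Hc]; specialize (Hc 0%nat d_pos);
      [|rewrite shift_at in Hc]; unfold blo; lia. }
  assert (Hxi : forall i, (1 <= i < d)%nat -> (lo i <= x i <= hi i)%Z).
  { intros i Hi. destruct Hc as [Hc|Hc]; apply C_coords in Hc as [_ Hc]; specialize (Hc i ltac:(lia));
      [|rewrite shift_other in Hc by lia]; auto. }
  destruct (Z.eq_dec (x 0%nat) (blo 0)) as [Eb|Nb]; [apply bottom_face_int; auto|].
  assert (HCx : C x).
  { apply HC. split; auto. intros i Hi. destruct (Nat.eq_dec i 0) as [->|]; [|apply Hxi; lia].
    destruct Hc as [Hc|Hc]; apply C_coords in Hc as [_ Hc]; specialize (Hc 0%nat d_pos);
      [|rewrite shift_at in Hc]; unfold blo in *; lia. }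
  destruct (classic (exists C', CC C' /\ nbhd d C' x)) as [[C' [HC' HnC']]|Hno].
  - assert (Hnx : ~ nbhd d C' (shift x 0 1)) by (intro; apply Hn; exists C'; auto).
    destruct (classic (x = vstar transDirs (nhi C') (exitBase C'))) as [Ex|Nx].
    + apply (corner_int C'); auto.
    + apply (exit_face_int C'); auto. apply exit_coord; auto.
  - apply conservation_int; auto. intros C' H1 H2; apply Hno; eauto.
Qed.

Lemma forward_int x : inZd d x -> EintAt x 0 -> isZ (psi x (shift x 0 1)).
Proof.
  enough (H : forall m x, inZd d x -> (x 0%nat < blo 0 + Z.of_nat m)%Z -> EintAt x 0 ->
                isZ (psi x (shift x 0 1))).
  { intros Hx HE. apply (H (S (Z.to_nat (x 0%nat - blo 0)))); auto. lia. }
  induction m as [|m IH]; intros y Hy Hym HE.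
  - exfalso. destruct (proj1 (EintAt_char y 0 Hy d_pos) HE) as [Hc _].
    destruct Hc as [Hc|Hc]; apply C_coords in Hc as [_ Hc]; specialize (Hc 0%nat d_pos);
      [|rewrite shift_at in Hc]; unfold blo in *; lia.
  - apply forward_int_step; auto. intros z Hz Hzy HEz. apply IH; auto. lia.
Qed.

Lemma psi_support : suppIn d (fun x y => phi x y - psi x y) (edges d (nbhd d C)).
Proof.
  intros x y Hadj HnE1 HnE2. unfold psi.
  destruct Hadj as [Hx [j [Hj [->| ->]]]].
  - rewrite eta_pos by auto. destruct (Req_dec (bdry x j) 0) as [E|E]; [rewrite E; ring|].
    exfalso. apply bdry_free in E as [[G1 _] [G2 _]]; auto. apply HnE1. split; auto.
    exists j; auto.
  - rewrite eta_neg by auto.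
    destruct (Req_dec (bdry (shift x j (-1)) j) 0) as [E|E]; [rewrite E; ring|].
    exfalso. apply bdry_free in E as [[G1 _] [G2 _]]; auto; [|apply inZd_shift; auto].
    rewrite shift_inv2 in G2. apply HnE2. split; [apply inZd_shift; auto|].
    exists j. rewrite shift_inv2. auto.
Qed.

Lemma psi_cubes C' : CC C' -> forall x y, adj d x y ->
  (edgesP d C' x y \/ edgesP d C' y x) -> phi x y - psi x y = 0.
Proof.
  intros HC' x y Hadj [[Hx [j [Hj [-> Hc]]]]|[Hy [j [Hj [-> Hc]]]]]; unfold psi.
  - rewrite eta_pos by auto. destruct (Req_dec (bdry x j) 0) as [E|E]; [rewrite E; ring|].
    exfalso. apply bdry_free in E as [[_ G1] [_ G2]]; auto.
    destruct Hc as [Hc|Hc]; [eapply G1|eapply G2]; eauto.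
  - replace (eta (shift y j 1) y) with (eta (shift y j 1) (shift (shift y j 1) j (-1)))
      by (rewrite shift_inv1; auto).
    rewrite eta_neg, shift_inv1 by auto.
    destruct (Req_dec (bdry y j) 0) as [E|E]; [rewrite E; ring|].
    exfalso. apply bdry_free in E as [[_ G1] [_ G2]]; auto.
    destruct Hc as [Hc|Hc]; [eapply G1|eapply G2]; eauto.
Qed.

Lemma psi_int x y : Eint x y -> exists z : Z, psi x y = IZR z.
Proof.
  intros HE. assert (HE0 := HE). destruct HE0 as [[Hx [j [Hj [-> _]]]] _].
  destruct (Nat.eq_dec j 0) as [->|Hj0].
  - apply forward_int; auto.
  - apply transverse_int; [lia|exact HE].
Qed.

Lemma psi_bound x y : adj d x y -> Rabs (phi x y - psi x y) < 6 * INR d.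
Proof.
  intros Hadj. unfold psi. replace (phi x y - (phi x y + eta x y)) with (- eta x y) by ring.
  rewrite Rabs_Ropp.
  assert (HdR : 2 <= INR d) by (replace 2 with (INR 2) by reflexivity; apply le_INR; lia).
  destruct Hadj as [Hx [j [Hj [->| ->]]]].
  - rewrite eta_pos by auto. eapply Rle_lt_trans; [apply bdry_bound; auto|lra].
  - rewrite eta_neg, Rabs_Ropp by auto. eapply Rle_lt_trans; [apply bdry_bound; auto|lra].
Qed.

End Correction.

Lemma inner_bounds d C C' : isCube d C -> isCube d C' ->
  (forall x, nbhd d C' x -> C x) -> forall i, (i < d)%nat ->
  (cLo d C i + 1 <= cLo d C' i)%Z /\ (cHi d C' i + 1 <= cHi d C i)%Z.
Proof.
  intros HC HC' Hs i Hi. destruct (cube_spec d C HC) as [H1 _].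
  destruct (cube_spec d C' HC') as [H2 H3].
  assert (Hb : forall x, Box d (fun i => cLo d C' i - 1)%Z (fun i => cHi d C' i + 1)%Z x ->
                         Box d (cLo d C) (cHi d C) x).
  { intros x Hx. apply H1, Hs. apply (nbhd_box d C' (cLo d C') (cHi d C')); auto. }
  destruct (box_sub _ _ _ _ _ Hb) with (i := i) as [A1 A2]; auto.
  - intros j. specialize (H3 j). lia.
  - lia.
Qed.

Theorem mainTheorem6
  (d : nat) (hd : (2 <= d)%nat)
  (C : pset) (hC : isCube d C)
  (CC : pset -> Prop)
  (hCC : forall C', CC C' -> isCube d C')
  (hsub : forall C', CC C' -> forall x, nbhd d C' x -> C x)
  (hdisj : forall C' C'', CC C' -> CC C'' -> C' <> C'' ->
             forall x, ~ (nbhd d C' x /\ nbhd d C'' x))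
  (f : pt -> Z) (phi : pt -> pt -> R)
  (hphi : isFlow d f phi) (hbdd : boundedFlow d phi) :
  let E := fun x y => edgesP d C x y /\
             ~ (exists C', CC C' /\ edges d (nbhd d C') x y) in
  exists psi : pt -> pt -> R,
    isFlow d f psi /\
    suppIn d (fun x y => phi x y - psi x y) (edges d (nbhd d C)) /\
    (forall C', CC C' -> forall x y, adj d x y ->
        (edgesP d C' x y \/ edgesP d C' y x) -> phi x y - psi x y = 0) /\
    (forall x y, E x y -> exists z : Z, psi x y = IZR z) /\
    (forall x y, adj d x y -> Rabs (phi x y - psi x y) < 6 * INR d).
Proof.
  intros E.
  destruct (cube_spec d C hC) as [HC Hlohi].
  assert (HCC : forall C', CC C' ->
     (forall v, C' v <-> Box d (cLo d C') (cHi d C') v) /\ (forall i, (cLo d C' i <= cHi d C' i)%Z))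
    by (intros C' H; apply cube_spec, hCC; auto).
  assert (Hsub : forall C', CC C' -> forall i, (i < d)%nat ->
     (cLo d C i + 1 <= cLo d C' i)%Z /\ (cHi d C' i + 1 <= cHi d C i)%Z)
    by (intros C' H; apply inner_bounds; [exact hC|apply hCC, H|apply hsub, H]).
  set (psi := psi d (cLo d C) (cHi d C) C CC (cLo d) (cHi d) phi).
  exists psi. split; [|split; [|split; [|split]]].
  - eapply psi_flow; eauto.
  - eapply psi_support; eauto.
  - eapply psi_cubes; eauto.
  - eapply psi_int; eauto.
  - eapply psi_bound; eauto.
Qed.
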